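(* Let $p>3$ be a prime, $a,m\in\mathbb Z_p$ with $m\not\equiv0\pmod p$ and $a\not\equiv0,\pm1,-2\pmod p$, and put $A_k=\binom ak\binom{-1-a}k\binom{2k}k$. Then $$\sum_{k=0}^{p-3}\frac{A_k}{m^k(k+2)}\equiv\frac{4-m}{6(a-1)(a+2)}\sum_{k=0}^{p-1}\frac{kA_k}{m^k}+\frac{m-6}{6(a-1)(a+2)}\sum_{k=0}^{p-1}\frac{A_k}{m^k}+\frac{2a(a+1)-m}{6(a-1)(a+2)}\sum_{k=0}^{p-2}\frac{A_k}{m^k(k+1)}\pmod{p^3}.$$
   Context: $\mathbb Z_p$ denotes the set of rational numbers whose denominator is not divisible by $p$; for $u,v\in\mathbb Z_p$, $u\equiv v\pmod{p^r}$ means $(u-v)/p^r\in\mathbb Z_p$. For $a$ rational, $\binom a0=1$ and $\binom ak=\frac{a(a-1)\cdots(a-k+1)}{k!}$ for $k\ge1$. *)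

From HB Require Import structures.
From mathcomp Require Import all_boot all_order all_algebra.
Set Implicit Arguments. Unset Strict Implicit. Unset Printing Implicit Defensive.
Import Order.TTheory GRing.Theory Num.Theory.
Local Open Scope ring_scope.

Definition in_Zp (p : nat) (q : rat) : bool := ~~ (p %| `|denq q|)%N.

Definition congr_mod_pow (p r : nat) (u v : rat) : Prop :=
  in_Zp p ((u - v) / (p ^ r)%:R).

Definition binq (a : rat) (k : nat) : rat :=
  (\prod_(i < k) (a - i%:R)) / (k`!)%:R.

Definition Ak (a : rat) (k : nat) : rat :=
  binq a k * binq (-1 - a) k * ('C(k.*2, k))%:R.

(* The weighted summand of LHS - RHS telescopes (Gosper): with
   c = 6(a-1)(a+2) and F(k) = -A_k k^2 / (m^(k-1) c (k+1)), it equals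
   F(k+1) - F(k).  So LHS - RHS is F(p) minus the boundary terms left over by the
   shorter first and third sums; the recurrence
   (k+1)^3 A_(k+1) = 2(2k+1)(k-a)(k+a+1) A_k turns all of them into A_(p-2) times a
   rational function of p, a, m whose denominator is prime to p.  Finally p^3
   divides A_(p-2): if a = i (mod p), the hypotheses force 2 <= i <= p-3, so the
   numerators of binom(a, p-2) and binom(-1-a, p-2) contain the factors a - i and
   -1-a-(p-1-i), both divisible by p, and p divides binom(2p-4, p-2) since
   p-2 < p <= 2p-4. *)

From HB Require Import structures.
From mathcomp Require Import all_boot all_order all_algebra.
From mathcomp Require Import ring zify.

Set Implicit Arguments.
Unset Strict Implicit.
Unset Printing Implicit Defensive.

Import Order.TTheory GRing.Theory Num.Theory.
Local Open Scope ring_scope.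

Lemma mul_bin_center k : ('C(k.+1.*2, k.+1) * k.+1 = 2 * k.*2.+1 * 'C(k.*2, k))%N.
Proof.
have sym : 'C(k.*2.+1, k.+1) = 'C(k.*2.+1, k).
  by rewrite -bin_sub; [congr 'C(_, _) |]; lia.
have e1 := mul_bin_diag k.+1.*2 k; have e2 := mul_bin_diag k.*2.+1 k.
rewrite /= sym in e2; rewrite doubleS /= in e1 *.
nia.
Qed.

Lemma prime_ndvd_fact p n : prime p -> (n < p)%N -> ~~ (p %| n`!)%N.
Proof.
move=> p_prime; elim: n => [|n IHn] lt_np; first by rewrite Euclid_dvd1.
by rewrite factS Euclid_dvdM // gtnNdvd //= IHn // ltnW.
Qed.

Lemma prime_dvd_bin_center p k : prime p -> (k < p <= k.*2)%N -> (p %| 'C(k.*2, k))%N.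
Proof.
move=> p_prime /andP [lt_kp le_p2k].
have := @dvdn_fact p k.*2; rewrite prime_gt0 // le_p2k => /(_ isT).
rewrite -addnn -(bin_fact (leq_addr k k)) addnK.
by rewrite !Euclid_dvdM // (negPf (prime_ndvd_fact p_prime lt_kp)) !orbF.
Qed.

Lemma binqS a k : binq a k.+1 = binq a k * (a - k%:R) / k.+1%:R.
Proof. by rewrite /binq big_ord_recr /= factS natrM invfM; ring. Qed.

Lemma AkS a k : Ak a k.+1 =
  2 * (2 * k%:R + 1) * (k%:R - a) * (k%:R + a + 1) / k.+1%:R ^+ 3 * Ak a k.
Proof.
have k1_neq0 : k.+1%:R != 0 :> rat by rewrite pnatr_eq0.
have center : 'C(k.+1.*2, k.+1)%:R = 2 * (2 * k%:R + 1) * 'C(k.*2, k)%:R / k.+1%:R :> rat.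
  apply: (canRL (mulfK k1_neq0)); rewrite -[in LHS]natrM mul_bin_center !natrM.
  by rewrite [(k.*2.+1)%:R]mulrSr -mul2n natrM.
(* [field] fails on the cast [k.+1%:R]; it must be unfolded to [k%:R + 1]. *)
rewrite /Ak !binqS center -addn1 natrD; field.
by rewrite natr1 pnatr_eq0.
Qed.

Definition gosper_cert (a m : rat) (k : nat) : rat :=
  - Ak a k / m ^+ k * m * k%:R ^+ 2 / (6 * (a - 1) * (a + 2) * k.+1%:R).

(* Numerator at x = n + 2 of (F(n+2) - boundary terms) / A_n in
   [truncated_sum_identity], computed with [AkS]; the 1/x poles cancel, which is
   what makes the right-hand side there p-integral at x = p. *)
Definition remainder_num {R : pzRingType} (a m x : R) : R :=
  2 * (2 * x - 3) * ((x - 1) * (x - 2) - a * (a + 1))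
    * (12 - m - 2 * (2 * x - 1) * (x - 1))
  - m * (a * (a + 1) * (6 * x ^+ 3 - 12 * x ^+ 2 + 8)
         - 12 * x ^+ 3 + 28 * x ^+ 2 - 18 * x + 2).

(* Over [rat] itself these rewrites unfold the concrete arithmetic and are very slow. *)
Lemma rpred_remainder_num (R : pzRingType) (S : subringClosed R) a m x :
  a \in S -> m \in S -> x \in S -> remainder_num a m x \in S.
Proof.
move=> Sa Sm Sx.
by rewrite /remainder_num !(rpredB, rpredD, rpredM, rpredX, rpred_nat, rpred1).
Qed.

Section Telescoping.

Variables a m : rat.
Hypotheses (m_neq0 : m != 0) (a_neq1 : a != 1) (a_neqN2 : a != -2).

Local Notation c := (6 * (a - 1) * (a + 2)).

Let a_sub1_neq0 : a - 1 != 0. Proof. by rewrite subr_eq0. Qed.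
Let a_add2_neq0 : a + 2 != 0. Proof. by rewrite addr_eq0. Qed.

Lemma gosper_certS k :
  Ak a k / (m ^+ k * k.+2%:R)
  - ((4 - m) / c * (k%:R * Ak a k / m ^+ k) + (m - 6) / c * (Ak a k / m ^+ k)
     + (2 * a * (a + 1) - m) / c * (Ak a k / (m ^+ k * k.+1%:R)))
  = gosper_cert a m k.+1 - gosper_cert a m k.
Proof.
rewrite /gosper_cert AkS [m ^+ k.+1]exprS -!natr1; field.
by rewrite !natr1 !pnatr_eq0 a_sub1_neq0 a_add2_neq0 m_neq0 expf_neq0.
Qed.

Lemma sum_gosper n :
  \sum_(0 <= k < n) Ak a k / (m ^+ k * k.+2%:R)
  - ((4 - m) / c * \sum_(0 <= k < n) k%:R * Ak a k / m ^+ k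
     + (m - 6) / c * \sum_(0 <= k < n) Ak a k / m ^+ k
     + (2 * a * (a + 1) - m) / c * \sum_(0 <= k < n) Ak a k / (m ^+ k * k.+1%:R))
  = gosper_cert a m n.
Proof.
rewrite !mulr_sumr -!big_split -sumrB /=.
rewrite (telescope_sumr_eq (gosper_cert a m)) // => [|k _]; last exact: gosper_certS.
by rewrite /gosper_cert expr0n /= mulr0 mul0r subr0.
Qed.

Lemma truncated_sum_identity n :
  \sum_(0 <= k < n) Ak a k / (m ^+ k * k.+2%:R)
  - ((4 - m) / c * \sum_(0 <= k < n.+2) k%:R * Ak a k / m ^+ k
     + (m - 6) / c * \sum_(0 <= k < n.+2) Ak a k / m ^+ k
     + (2 * a * (a + 1) - m) / c * \sum_(0 <= k < n.+1) Ak a k / (m ^+ k * k.+1%:R))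
  = Ak a n * (remainder_num a m n.+2%:R / (m ^+ n.+1 * c * n.+3%:R * n.+1%:R ^+ 3)).
Proof.
have := sum_gosper n.+2.
rewrite [\sum_(0 <= k < n.+2) Ak a k / (m ^+ k * k.+2%:R)]big_nat_recr //=.
rewrite [\sum_(0 <= k < n.+1) Ak a k / (m ^+ k * k.+2%:R)]big_nat_recr //=.
rewrite [\sum_(0 <= k < n.+2) Ak a k / (m ^+ k * k.+1%:R)]big_nat_recr //= => telescoped.
apply: (@etrans _ _ (gosper_cert a m n.+2 - Ak a n / (m ^+ n * n.+2%:R)
  - Ak a n.+1 / (m ^+ n.+1 * n.+3%:R)
  + (2 * a * (a + 1) - m) / c * (Ak a n.+1 / (m ^+ n.+1 * n.+2%:R)))).
  by rewrite -telescoped; ring.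
rewrite /gosper_cert /remainder_num !AkS [m ^+ n.+2]exprS [m ^+ n.+1]exprS -!natr1; field.
by rewrite !natr1 !pnatr_eq0 a_sub1_neq0 a_add2_neq0 m_neq0 expf_neq0.
Qed.

End Telescoping.

Lemma congr_mod_pow_sub0 p r x y : congr_mod_pow p r (x - y) 0 = congr_mod_pow p r x y.
Proof. by rewrite /congr_mod_pow subr0. Qed.

Section PadicIntegers.

Variable p : nat.
Hypothesis p_prime : prime p.

Definition Zp_int : {pred rat} := in_Zp p.

Lemma in_ZpE x : (x \in Zp_int) = ~~ (p %| `|denq x|)%N.
Proof. by []. Qed.

Lemma Zp_frac (n d : int) : ~~ (p %| `|d|)%N -> n%:~R / d%:~R \in Zp_int.
Proof.
rewrite in_ZpE; case: divqP => [_ | k x _]; first by rewrite Euclid_dvd1.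
by apply: contra; rewrite abszM; apply: dvdn_mull.
Qed.

Lemma Zp_subring_closed : subring_closed Zp_int.
Proof.
have den0 x : (denq x)%:~R != 0 :> rat by rewrite intr_eq0 denq_neq0.
have ndvd_den x y : x \in Zp_int -> y \in Zp_int -> ~~ (p %| `|(denq x * denq y)%R|)%N.
  by rewrite !in_ZpE abszM Euclid_dvdM // negb_or => -> ->.
split=> [|x y Zx Zy|x y Zx Zy]; first by rewrite in_ZpE Euclid_dvd1.
- rewrite -[x]divq_num_den -[y]divq_num_den.
  have -> : (numq x)%:~R / (denq x)%:~R - (numq y)%:~R / (denq y)%:~R
          = (numq x * denq y - numq y * denq x)%:~R / (denq x * denq y)%:~R :> rat.
    by rewrite intrB !intrM; field; rewrite !den0.
  exact/Zp_frac/ndvd_den.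
- rewrite -[x]divq_num_den -[y]divq_num_den.
  have -> : (numq x)%:~R / (denq x)%:~R * ((numq y)%:~R / (denq y)%:~R)
          = (numq x * numq y)%:~R / (denq x * denq y)%:~R :> rat.
    by rewrite !intrM invfM mulrACA.
  exact/Zp_frac/ndvd_den.
Qed.

HB.instance Definition _ := GRing.isSubringClosed.Build rat Zp_int Zp_subring_closed.

Lemma congr_mod_powE r x y :
  congr_mod_pow p r x y = ((x - y) / (p ^ r)%:R \in Zp_int).
Proof. by []. Qed.

Lemma Zp_natV n : ~~ (p %| n)%N -> n%:R^-1 \in Zp_int.
Proof. by move=> ndvd; have := @Zp_frac 1 n ndvd; rewrite div1r pmulrn. Qed.

Lemma Zp_invr x : x \in Zp_int -> ~ congr_mod_pow p 1 x 0 -> x^-1 \in Zp_int.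
Proof.
rewrite congr_mod_powE subr0 expn1 => Zx Nx.
rewrite -[x]divq_num_den invf_div; apply: Zp_frac.
apply: contra_notN Nx => /(@dvdzP p) [t numt].
have p0 : p%:R != 0 :> rat by rewrite pnatr_eq0 -lt0n prime_gt0.
rewrite -[x]divq_num_den numt intrM pmulrn mulrAC mulfK //; exact: Zp_frac.
Qed.

Lemma Zp_residue x : x \in Zp_int -> exists2 i, (i < p)%N & congr_mod_pow p 1 x i%:R.
Proof.
rewrite in_ZpE => Zx; set n := numq x; set d := denq x.
have [u [v]] := Bezoutz d p.
rewrite (eqP (_ : coprimez d p)); last by rewrite coprimezE coprime_sym prime_coprime.
move=> bezout.
have p0 : p%:Z != 0 by rewrite eqz_nat -lt0n prime_gt0.
(* the residue is n u mod p, where u d = 1 (mod p) *)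
set q := ((n * u) %/ p)%Z; set r := ((n * u) %% p)%Z.
have r_ge0 : 0 <= r by apply: modz_ge0.
exists `|r|%N.
  by rewrite -ltz_nat gez0_abs // ltz_pmod // ltz_nat prime_gt0.
set s := n * v + q * d.
have e : n - r * d = s * p.
  have -> : r = n * u - q * p by rewrite [n * u](divz_eq _ p) addrC addKr.
  have -> : n - (n * u - q * p) * d = n * (1 - u * d) + q * d * p by ring.
  by rewrite /s -bezout; ring.
have d0 : d%:~R != 0 :> rat by rewrite intr_eq0 denq_neq0.
have pr0 : p%:R != 0 :> rat by rewrite pnatr_eq0 -lt0n prime_gt0.
have /(congr1 (intmul (1 : rat))) := e; rewrite intrB !intrM pmulrn => eR.
rewrite congr_mod_powE expn1 gez0_abs // -[x]divq_num_den -/n -/d.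
rewrite -[n%:~R](subrK (r%:~R * d%:~R)) eR.
have -> : (s%:~R * p%:R + r%:~R * d%:~R) / d%:~R - r%:~R = s%:~R * p%:R / d%:~R :> rat.
  by field.
by rewrite mulrAC mulfK //; apply: Zp_frac.
Qed.

Lemma congr_mod_pow_refl r x : congr_mod_pow p r x x.
Proof. by rewrite congr_mod_powE subrr mul0r rpred0. Qed.

Lemma congr_mod_pow_shift r x y z :
  z \in Zp_int -> congr_mod_pow p r x y -> congr_mod_pow p r x (y + (p ^ r)%:R * z).
Proof.
have pr0 : (p ^ r)%:R != 0 :> rat by rewrite pnatr_eq0 expn_eq0 negb_and -lt0n prime_gt0.
rewrite !congr_mod_powE => Zz xy.
have -> : (x - (y + (p ^ r)%:R * z)) / (p ^ r)%:R = (x - y) / (p ^ r)%:R - z by field.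
exact: rpredB.
Qed.

Lemma congr_mod_pow_subl r c x y :
  congr_mod_pow p r x y -> congr_mod_pow p r (c - x) (c - y).
Proof.
rewrite !congr_mod_powE (_ : c - x - (c - y) = - (x - y)); last by ring.
by rewrite mulNr rpredN.
Qed.

Lemma congr_mod_pow_mulr r x y :
  y \in Zp_int -> congr_mod_pow p r x 0 -> congr_mod_pow p r (x * y) 0.
Proof. by rewrite !congr_mod_powE !subr0 mulrAC => Zy Zx; apply: rpredM. Qed.

Lemma congr_mod_pow_mul r s x y :
  congr_mod_pow p r x 0 -> congr_mod_pow p s y 0 -> congr_mod_pow p (r + s) (x * y) 0.
Proof.
by rewrite !congr_mod_powE !subr0 expnD natrM invfM mulrACA => Zx Zy; apply: rpredM.
Qed.

Lemma congr_mod_pow_dvdn r N : (p ^ r %| N)%N -> congr_mod_pow p r N%:R 0.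
Proof.
have pr0 : (p ^ r)%:R != 0 :> rat by rewrite pnatr_eq0 expn_eq0 negb_and -lt0n prime_gt0.
by case/dvdnP=> t ->; rewrite !congr_mod_powE subr0 natrM mulfK ?rpred_nat.
Qed.

Lemma congr_mod_pow_prod x i n : x \in Zp_int -> (i < n)%N ->
  congr_mod_pow p 1 x i%:R -> congr_mod_pow p 1 (\prod_(j < n) (x - j%:R)) 0.
Proof.
move=> Zx lt_in xi; rewrite (bigD1 (Ordinal lt_in)) //=.
apply: congr_mod_pow_mulr; first by apply: rpred_prod => j _; rewrite rpredB ?rpred_nat.
by rewrite !congr_mod_powE subr0.
Qed.

Lemma Ak_p_sub2_congr0 a : (3 < p)%N -> a \in Zp_int ->
  ~ congr_mod_pow p 1 a 0 -> ~ congr_mod_pow p 1 a 1 ->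
  ~ congr_mod_pow p 1 a (-1) -> ~ congr_mod_pow p 1 a (-2) ->
  congr_mod_pow p 3 (Ak a (p - 2)) 0.
Proof.
move=> p_gt3 Za a0 a1 aN1 aN2.
have [i lt_ip ai] := Zp_residue Za.
have residue_shift j : (j <= p)%N ->
    congr_mod_pow p 1 a (p - j)%:R -> congr_mod_pow p 1 a (- j%:R).
  move=> le_jp /(congr_mod_pow_shift (rpredN1 Zp_int)).
  by rewrite expn1 mulrN1 natrB // addrAC subrr add0r.
have i_gt1 : (1 < i)%N.
  by case: i lt_ip ai => [|[|//]] _ ai; [case: (a0 ai) | case: (a1 ai)].
have lt_i_p2 : (i < p - 2)%N.
  rewrite ltnNge; apply/negP => le_p2_i; move: ai.
  have [->|->] : i = (p - 2)%N \/ i = (p - 1)%N by lia.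
  - by move/residue_shift => /(_ _)/aN2; apply; lia.
  - by move/residue_shift => /(_ _)/aN1; apply; lia.
have -> : Ak a (p - 2) = (\prod_(j < p - 2) (a - j%:R)) *
    (\prod_(j < p - 2) (-1 - a - j%:R)) * ('C((p - 2).*2, p - 2))%:R *
    ((p - 2)`!%:R^-1) ^+ 2.
  by rewrite /Ak /binq; ring.
apply: congr_mod_pow_mulr.
  by rewrite rpredX // Zp_natV // prime_ndvd_fact //; lia.
apply: (@congr_mod_pow_mul 2 1); first apply: (@congr_mod_pow_mul 1 1).
- exact: congr_mod_pow_prod Za lt_i_p2 ai.
- apply: (@congr_mod_pow_prod _ (p - i.+1)); [by rewrite rpredB ?rpredN1 | lia |].
  have -> : (p - i.+1)%:R = -1 - i%:R + (p ^ 1)%:R * 1 :> rat.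
    by rewrite natrB // mulrSr expn1; ring.
  exact: congr_mod_pow_shift (rpred1 Zp_int) (congr_mod_pow_subl (-1) ai).
- by apply: congr_mod_pow_dvdn; rewrite expn1 prime_dvd_bin_center //; lia.
Qed.

Lemma remainder_factor_Zp a m : (3 < p)%N -> a \in Zp_int -> m \in Zp_int ->
  ~ congr_mod_pow p 1 m 0 -> ~ congr_mod_pow p 1 a 1 -> ~ congr_mod_pow p 1 a (-2) ->
  remainder_num a m p%:R /
    (m ^+ (p - 1) * (6 * (a - 1) * (a + 2)) * p.+1%:R * (p - 1)%:R ^+ 3) \in Zp_int.
Proof.
move=> p_gt3 Za Zm m0 a1 aN2.
have Zpoly : remainder_num a m p%:R \in Zp_int by rewrite rpred_remainder_num ?rpred_nat.
have Z6 : 6^-1 \in Zp_int.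
  by apply: Zp_natV; rewrite (_ : 6 = 2 * 3)%N // Euclid_dvdM // !gtnNdvd //; lia.
have Zp1 : p.+1%:R^-1 \in Zp_int by rewrite Zp_natV // -addn1 dvdn_addr // Euclid_dvd1.
have Zpm1 : (p - 1)%:R^-1 \in Zp_int by rewrite Zp_natV // gtnNdvd //; lia.
have Zam1 : (a - 1)^-1 \in Zp_int.
  by apply: Zp_invr; [rewrite rpredB ?rpred1 | rewrite congr_mod_pow_sub0].
have Zap2 : (a + 2)^-1 \in Zp_int.
  rewrite -[2]opprK.
  by apply: Zp_invr; [rewrite rpredB ?rpredN ?rpred_nat | rewrite congr_mod_pow_sub0].
have Zm1 : m^-1 \in Zp_int by apply: Zp_invr.
by rewrite !invfM -!exprVn !rpredM ?rpredX.
Qed.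

End PadicIntegers.

Theorem theorem6p1 (p : nat) (a m : rat) :
  prime p -> (3 < p)%N ->
  in_Zp p a -> in_Zp p m ->
  ~ congr_mod_pow p 1 m 0 ->
  ~ congr_mod_pow p 1 a 0 -> ~ congr_mod_pow p 1 a 1 ->
  ~ congr_mod_pow p 1 a (-1) -> ~ congr_mod_pow p 1 a (-2) ->
  congr_mod_pow p 3
    (\sum_(0 <= k < (p - 3).+1) Ak a k / (m ^+ k * (k.+2)%:R))
    ((4 - m) / (6 * (a - 1) * (a + 2)) *
        (\sum_(0 <= k < p) k%:R * Ak a k / m ^+ k)
     + (m - 6) / (6 * (a - 1) * (a + 2)) *
        (\sum_(0 <= k < p) Ak a k / m ^+ k)
     + (2 * a * (a + 1) - m) / (6 * (a - 1) * (a + 2)) *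
        (\sum_(0 <= k < (p - 2).+1) Ak a k / (m ^+ k * (k.+1)%:R))).
Proof.
move=> p_prime p_gt3 Za Zm m0 a0 a1 aN1 aN2.
have neq_of_ncongr x y : ~ congr_mod_pow p 1 x y -> x != y.
  by apply: contra_notN => /eqP ->; apply: congr_mod_pow_refl.
have [n def_p] : exists n, p = n.+2 by exists (p - 2)%N; lia.
subst p; rewrite -congr_mod_pow_sub0 (_ : (n.+2 - 3).+1 = n)%N; last by lia.
rewrite (_ : (n.+2 - 2).+1 = n.+1)%N; last by lia.
rewrite truncated_sum_identity ?neq_of_ncongr //.
apply: (congr_mod_pow_mulr p_prime); first exact: remainder_factor_Zp.
by have := Ak_p_sub2_congr0 p_prime p_gt3 Za a0 a1 aN1 aN2; rewrite subn2.
Qed.
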